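(* Let $V$ be a Hermitian positive definite $m\times m$ matrix such that $\hat L^\dagger(\mathbf{k})V\hat L(\mathbf{k})$ is nonsingular for every nonzero $\mathbf{k}\in\mathbb{R}^d$, set $\Gamma(\mathbf{k})=\hat L(\mathbf{k})\big(\hat L^\dagger(\mathbf{k})V\hat L(\mathbf{k})\big)^{-1}\hat L^\dagger(\mathbf{k})$ and $\Delta(\mathbf{k})=V-V\Gamma(\mathbf{k})V$. Let $\mathbf{w}\in\mathbb{C}^m$ and suppose $\beta=\sup_{\mathbf{k}\in\mathbb{R}^d,\mathbf{k}\neq0}\mathbf{w}\cdot\Delta(\mathbf{k})\mathbf{w}$ is finite and positive. Let $T=V^{-1}-\mathbf{w}\mathbf{w}^\dagger/\beta$ and $g(\mathbf{J})=\mathbf{J}\cdot T\mathbf{J}$. Let $\mathbf{k}\neq0$ satisfy $\mathbf{w}\cdot\Delta(\mathbf{k})\mathbf{w}=\beta$. Then the set of $\mathbf{H}\in\mathcal{J}_{\mathbf{k}}$ with $g(\mathbf{H})=0$ consists exactly of the vectors $\mathbf{H}=b\Delta(\mathbf{k})\mathbf{w}$ with $b\in\mathbb{C}$, and for such $\mathbf{H}$ one has $T\mathbf{H}=-b\Gamma(\mathbf{k})V\mathbf{w}=\hat L(\mathbf{k})\mathbf{G}$ with $\mathbf{G}=-b\big(\hat L^\dagger(\mathbf{k})V\hat L(\mathbf{k})\big)^{-1}\hat L^\dagger(\mathbf{k})V\mathbf{w}$.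
   Context: Fix integers $d,\ell,m,t\ge 1$ and complex constants $A_{rq}$, $A^{a_1\ldots a_h}_{rqh}$ ($1\le r\le m$, $1\le q\le \ell$, $1\le h\le t$, $1\le a_i\le d$). For $\mathbf{k}\in\mathbb{R}^d$, $\hat L(\mathbf{k})$ is the $m\times\ell$ matrix with entries $A_{rq}+\sum_{h=1}^t\sum_{a_1,\ldots,a_h=1}^d i^hA^{a_1\ldots a_h}_{rqh}k_{a_1}\cdots k_{a_h}$, $\hat L^\dagger(\mathbf{k})$ is its conjugate transpose, and $\mathcal{J}_{\mathbf{k}}\subset\mathbb{C}^m$ is the null space of $\hat L^\dagger(\mathbf{k})$; $\mathbf{w}^\dagger$ is the conjugate transpose of $\mathbf{w}$. For $\mathbf{a},\mathbf{b}\in\mathbb{C}^m$, $\mathbf{a}\cdot\mathbf{b}=\sum_r\overline{a_r}b_r$. *)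

From mathcomp Require Import all_boot all_algebra.
From mathcomp Require Import reals.
From mathcomp.real_closed Require Import complex.

Set Implicit Arguments.
Unset Strict Implicit.
Unset Printing Implicit Defensive.

Import GRing.Theory Num.Theory.
Local Open Scope ring_scope.

Section Defs.
Variables (R : realType) (d l m t : nat).
Local Notation C := (R[i]).

Definition iunit : C := Complex 0 1.
Definition RtoC (x : R) : C := Complex x 0.

Definition ctr p q (M : 'M[C]_(p, q)) : 'M[C]_(q, p) := map_mx Num.conj (M^T).

Definition dotc p (a b : 'cV[C]_p) : C := \sum_(r < p) Num.conj (a r 0) * b r 0.

(* Constant coefficients A_{rq} : A0 r q ; higher coefficients
   A^{a_1..a_h}_{rqh} : Ah h r q a  with a : 'I_h -> 'I_d (a j = a_{j+1}). *)
Variables (A0 : 'M[C]_(m, l))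
          (Ah : forall h : nat, 'I_m -> 'I_l -> {ffun 'I_h -> 'I_d} -> C).

Definition Lhat (k : 'rV[R]_d) : 'M[C]_(m, l) :=
  \matrix_(r < m, q < l)
    (A0 r q + \sum_(1 <= h < t.+1) \sum_(a : {ffun 'I_h -> 'I_d})
       iunit ^+ h * @Ah h r q a * \prod_(j < h) RtoC (k 0 (a j))).

Definition Ldag (k : 'rV[R]_d) : 'M[C]_(l, m) := ctr (Lhat k).

Definition inJ (k : 'rV[R]_d) (H : 'cV[C]_m) : Prop := Ldag k *m H = 0.

Variable V : 'M[C]_m.

Definition Gamma (k : 'rV[R]_d) : 'M[C]_m :=
  Lhat k *m invmx (Ldag k *m V *m Lhat k) *m Ldag k.

Definition Delta (k : 'rV[R]_d) : 'M[C]_m := V - V *m Gamma k *m V.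

End Defs.

Definition herm_mx (R : realType) m (V : 'M[R[i]]_m) : Prop := ctr V = V.

Definition posdef_mx (R : realType) m (V : 'M[R[i]]_m) : Prop :=
  forall x : 'cV[R[i]]_m, x != 0 -> 0 < dotc x (V *m x).

(* On the kernel J_k of L^dagger, the matrix Delta V^-1 acts as the identity
   (Gamma kills J_k), and Delta maps into J_k.  Hence for H in J_k, with
   u := Delta w, one has w . H = u . V^-1 H and u . V^-1 u = w . Delta w = beta,
   so g(H) = H . V^-1 H - |u . V^-1 H|^2 / (u . V^-1 u) is the defect in the
   Cauchy-Schwarz inequality for the inner product given by V^-1.  It vanishes
   exactly when H is proportional to u.  Finally V^-1 Delta = 1 - Gamma V,
   which gives T Delta w = - Gamma V w. *)

From mathcomp Require Import all_boot all_algebra.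
From mathcomp Require Import order reals.
From mathcomp.real_closed Require Import complex.
Import Order.TTheory GRing.Theory Num.Theory.
Local Open Scope ring_scope.

Set Implicit Arguments.
Unset Strict Implicit.
Unset Printing Implicit Defensive.

Section Adjoint.
Variable R : realType.
Local Notation C := R[i].

Lemma ctrM p q r (A : 'M[C]_(p, q)) (B : 'M[C]_(q, r)) :
  ctr (A *m B) = ctr B *m ctr A.
Proof. by rewrite /ctr trmx_mul map_mxM. Qed.

Lemma ctrK p q (A : 'M[C]_(p, q)) : ctr (ctr A) = A.
Proof. by apply/matrixP=> i j; rewrite /ctr !mxE conjCK. Qed.

Lemma ctrB p q (A B : 'M[C]_(p, q)) : ctr (A - B) = ctr A - ctr B.
Proof. by apply/matrixP=> i j; rewrite /ctr !mxE rmorphB. Qed.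

Lemma ctr_invmx n (A : 'M[C]_n) : ctr (invmx A) = invmx (ctr A).
Proof. by rewrite /ctr trmx_inv map_invmx. Qed.

Lemma dotcE p (a b : 'cV[C]_p) : dotc a b = (ctr a *m b) 0 0.
Proof. by rewrite /dotc mxE; apply: eq_bigr => i _; rewrite /ctr !mxE. Qed.

Lemma dotc_mulmxr p q (x : 'cV[C]_p) (A : 'M[C]_(p, q)) y :
  dotc x (A *m y) = dotc (ctr A *m x) y.
Proof. by rewrite !dotcE ctrM ctrK mulmxA. Qed.

Lemma dotc_mulmxl p q (x : 'cV[C]_q) (A : 'M[C]_(p, q)) y :
  dotc (A *m x) y = dotc x (ctr A *m y).
Proof. by rewrite dotc_mulmxr ctrK. Qed.

Lemma dotc_conj p (x y : 'cV[C]_p) : (dotc x y)^* = dotc y x.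
Proof.
rewrite /dotc rmorph_sum; apply: eq_bigr => i _.
by rewrite rmorphM /= conjCK mulrC.
Qed.

Lemma dotcBr p (x y z : 'cV[C]_p) : dotc x (y - z) = dotc x y - dotc x z.
Proof. by rewrite !dotcE mulmxBr !mxE. Qed.

Lemma dotcBl p (x y z : 'cV[C]_p) : dotc (x - y) z = dotc x z - dotc y z.
Proof.
by rewrite /dotc -sumrB; apply: eq_bigr => i _; rewrite !mxE rmorphB mulrBl.
Qed.

Lemma dotcZr p (x y : 'cV[C]_p) a : dotc x (a *: y) = a * dotc x y.
Proof. by rewrite !dotcE -scalemxAr mxE. Qed.

Lemma dotcZl p (x y : 'cV[C]_p) a : dotc (a *: x) y = a^* * dotc x y.
Proof. by rewrite -dotc_conj dotcZr rmorphM /= dotc_conj. Qed.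

Lemma dotc0l p (y : 'cV[C]_p) : dotc 0 y = 0.
Proof. by rewrite /dotc big1 // => i _; rewrite mxE rmorph0 mul0r. Qed.

Lemma dotc0r p (y : 'cV[C]_p) : dotc y 0 = 0.
Proof. by rewrite /dotc big1 // => i _; rewrite mxE mulr0. Qed.

Lemma mulmx_outer p (w x : 'cV[C]_p) : w *m ctr w *m x = dotc w x *: w.
Proof.
by apply/matrixP=> i j; rewrite (ord1 j) -mulmxA !mxE big_ord1 dotcE mulrC mxE.
Qed.

Lemma herm_dotc_real n (W : 'M[C]_n) x :
  herm_mx W -> (dotc x (W *m x))^* = dotc x (W *m x).
Proof. by move=> hW; rewrite dotc_conj dotc_mulmxr hW. Qed.

Lemma posdef_dotc_eq0 n (W : 'M[C]_n) x :
  posdef_mx W -> dotc x (W *m x) = 0 -> x = 0.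
Proof.
by move=> pdW x0; apply/eqP; apply: contraT => /pdW; rewrite x0 ltxx.
Qed.

Lemma posdef_unitmx n (V : 'M[C]_n) : posdef_mx V -> V \in unitmx.
Proof.
move=> pdV; rewrite -unitmx_tr -row_free_unit -kermx_eq0.
apply/eqP/row_matrixP=> i; rewrite row0.
have kerV : V *m (row i (kermx V^T))^T = 0.
  by rewrite -[V]trmxK -trmx_mul trmxK -row_mul mulmx_ker row0 trmx0.
apply: trmx_inj; rewrite trmx0.
by apply: (posdef_dotc_eq0 pdV); rewrite kerV dotc0r.
Qed.

Lemma herm_invmx n (V : 'M[C]_n) : herm_mx V -> herm_mx (invmx V).
Proof. by move=> hV; rewrite /herm_mx ctr_invmx hV. Qed.

Lemma posdef_invmx n (V : 'M[C]_n) :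
  herm_mx V -> posdef_mx V -> posdef_mx (invmx V).
Proof.
move=> hV pdV x x0; have unitV := posdef_unitmx pdV.
have y0 : invmx V *m x != 0.
  by apply: contra x0 => /eqP y0; rewrite -[x](mulKVmx unitV) y0 mulmx0.
have := pdV _ y0; rewrite mulKVmx //.
by rewrite dotc_mulmxr herm_invmx.
Qed.

(* The equality case of the Cauchy-Schwarz inequality
   |u . W x|^2 <= (x . W x) (u . W u): the remainder of x after projecting
   onto u is W-orthogonal to u, so its W-norm is the defect. *)
Lemma posdef_cauchy_schwarz_eq n (W : 'M[C]_n) (u x : 'cV[C]_n) a :
  herm_mx W -> posdef_mx W -> dotc u (W *m u) = a -> a != 0 ->
  dotc x (W *m x) = a^-1 * ((dotc u (W *m x))^* * dotc u (W *m x)) ->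
  x = (dotc u (W *m x) / a) *: u.
Proof.
move=> hW pdW uWu a0 defect0; set p := dotc u (W *m x) in defect0 *.
set r := x - (p / a) *: u.
have ur : dotc u (W *m r) = 0.
  by rewrite mulmxBr -scalemxAr dotcBr dotcZr uWu mulfVK // subrr.
have ru : dotc r (W *m u) = 0.
  by rewrite dotc_mulmxr hW -dotc_conj ur rmorph0.
have rr : dotc r (W *m r) = 0.
  rewrite {2}/r mulmxBr -scalemxAr dotcBr dotcZr ru mulr0 subr0.
  rewrite dotcBl dotcZl -/p defect0 fmorph_div /= -uWu herm_dotc_real // uWu.
  by rewrite mulrA [a^-1 * _]mulrC subrr.
by apply/eqP; rewrite -subr_eq0 -/r (posdef_dotc_eq0 pdW rr).
Qed.

Lemma dotc_rank_one_update n (W : 'M[C]_n) (w x : 'cV[C]_n) c :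
  dotc x ((W - c *: (w *m ctr w)) *m x)
  = dotc x (W *m x) - c * ((dotc w x)^* * dotc w x).
Proof.
rewrite mulmxBl -scalemxAl mulmx_outer dotcBr !dotcZr dotc_conj.
by rewrite [_ * dotc x w]mulrC.
Qed.

End Adjoint.

Section WeightedProjection.
Variables (R : realType) (m l : nat) (L : 'M[R[i]]_(m, l)) (V : 'M[R[i]]_m).
Hypotheses (hermV : herm_mx V) (unitV : V \in unitmx)
  (unitM : ctr L *m V *m L \in unitmx).

Local Notation Gam := (L *m invmx (ctr L *m V *m L) *m ctr L).
Local Notation Del := (V - V *m Gam *m V).

Lemma ctr_mulmx_Delta : ctr L *m Del = 0.
Proof. by rewrite mulmxBr !mulmxA (mulmxV unitM) mul1mx subrr. Qed.

Lemma herm_Gamma : herm_mx Gam.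
Proof. by rewrite /herm_mx !ctrM ctr_invmx !ctrM ctrK hermV !mulmxA. Qed.

Lemma herm_Delta : herm_mx Del.
Proof. by rewrite /herm_mx ctrB ctrM ctrM herm_Gamma hermV mulmxA. Qed.

Lemma invmx_mulmx_Delta : invmx V *m Del = 1%:M - Gam *m V.
Proof. by rewrite mulmxBr (mulVmx unitV) !mulmxA (mulVmx unitV) mul1mx. Qed.

Lemma Delta_invmx_kernel (J : 'cV[R[i]]_m) :
  ctr L *m J = 0 -> Del *m (invmx V *m J) = J.
Proof.
move=> LJ; have DV : Del *m invmx V = 1%:M - V *m Gam.
  rewrite mulmxBl (mulmxV unitV) -(mulmxA (V *m Gam) V).
  by rewrite (mulmxV unitV) mulmx1.
by rewrite [Del *m _]mulmxA DV mulmxBl mul1mx -!mulmxA LJ !mulmx0 subr0.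
Qed.

Lemma dotc_Delta_invmx_kernel (w J : 'cV[R[i]]_m) :
  ctr L *m J = 0 -> dotc (Del *m w) (invmx V *m J) = dotc w J.
Proof. by move=> LJ; rewrite dotc_mulmxl herm_Delta Delta_invmx_kernel. Qed.

Lemma rank_one_update_mulmx_Delta (w : 'cV[R[i]]_m) beta :
  beta != 0 -> dotc w (Del *m w) = beta ->
  (invmx V - beta^-1 *: (w *m ctr w)) *m (Del *m w) = - (Gam *m V *m w).
Proof.
move=> beta0 wDw; rewrite mulmxBl [invmx V *m _]mulmxA invmx_mulmx_Delta.
rewrite -scalemxAl mulmx_outer wDw scalerA mulVf // scale1r.
by rewrite mulmxBl mul1mx addrAC subrr add0r.
Qed.

End WeightedProjection.

Theorem mainTheorem5 (R : realType) (d l m t : nat)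
  (hd : (1 <= d)%N) (hl : (1 <= l)%N) (hm : (1 <= m)%N) (ht : (1 <= t)%N)
  (A0 : 'M[R[i]]_(m, l))
  (Ah : forall h : nat, 'I_m -> 'I_l -> {ffun 'I_h -> 'I_d} -> R[i])
  (V : 'M[R[i]]_m) (w : 'cV[R[i]]_m) (beta : R[i]) (k : 'rV[R]_d) :
  herm_mx V -> posdef_mx V ->
  (forall k' : 'rV[R]_d, k' != 0 ->
     Ldag t A0 Ah k' *m V *m Lhat t A0 Ah k' \in unitmx) ->
  (* beta = sup_{k' <> 0} w . Delta(k') w, finite and positive *)
  (forall k' : 'rV[R]_d, k' != 0 -> dotc w (Delta t A0 Ah V k' *m w) <= beta) ->
  (forall e : R[i], 0 < e -> exists k' : 'rV[R]_d,
     k' != 0 /\ beta - e < dotc w (Delta t A0 Ah V k' *m w)) ->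
  0 < beta ->
  k != 0 ->
  dotc w (Delta t A0 Ah V k *m w) = beta ->
  let T := invmx V - beta^-1 *: (w *m ctr w) in
  let g := fun J : 'cV[R[i]]_m => dotc J (T *m J) in
  (forall H : 'cV[R[i]]_m,
     (inJ t A0 Ah k H /\ g H = 0) <->
     exists b : R[i], H = b *: (Delta t A0 Ah V k *m w)) /\
  (forall b : R[i],
     let H := b *: (Delta t A0 Ah V k *m w) in
     let G := - b *: (invmx (Ldag t A0 Ah k *m V *m Lhat t A0 Ah k)
                        *m Ldag t A0 Ah k *m V *m w) in
     T *m H = - b *: (Gamma t A0 Ah V k *m V *m w) /\
     T *m H = Lhat t A0 Ah k *m G).
Proof.
move=> hermV pdV unitLVL _ _ beta_gt0 k0 wDw T g.
have unitV := posdef_unitmx pdV.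
have unitM := unitLVL k k0.
have beta0 : beta != 0 by rewrite gt_eqF.
rewrite /inJ /Delta /Gamma /Ldag in wDw unitM *.
set L := Lhat t A0 Ah k in wDw unitM *.
set D := V - _ in wDw *.
have LDw : ctr L *m (D *m w) = 0 by rewrite mulmxA ctr_mulmx_Delta // mul0mx.
have uW := dotc_Delta_invmx_kernel (L := L) hermV unitV w.
have GammaVw : L *m invmx (ctr L *m V *m L) *m ctr L *m V *m w
             = L *m (invmx (ctr L *m V *m L) *m ctr L *m V *m w).
  by rewrite !mulmxA.
have TH b : T *m (b *: (D *m w))
            = - b *: (L *m invmx (ctr L *m V *m L) *m ctr L *m V *m w).
  by rewrite -scalemxAr rank_one_update_mulmx_Delta // scalerN scaleNr.
split=> [H|b]; last by split; [exact: TH | rewrite TH GammaVw scalemxAr].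
split=> [[LH gH]|[b ->]]; last first.
  have LbDw : ctr L *m (b *: (D *m w)) = 0 by rewrite -scalemxAr LDw scaler0.
  split=> //; rewrite /g TH GammaVw [- b *: _]scalemxAr.
  by rewrite dotc_mulmxr LbDw dotc0l.
have uWu := uW _ LDw; rewrite wDw in uWu.
move: gH; rewrite /g /T dotc_rank_one_update -(uW _ LH) => /eqP.
rewrite subr_eq0 => /eqP gH.
exists (dotc w H / beta); rewrite -(uW _ LH).
exact: posdef_cauchy_schwarz_eq (herm_invmx hermV) (posdef_invmx hermV pdV)
  uWu beta0 gH.
Qed.
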